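(* Let $m\in\mathbb N^+$, let $\mathcal N$ be a set of monomials of degree $m$ in $X$ and $Y$, and let $I=\langle X^m,Y^m,\mathcal N\rangle\subseteq R$. Suppose that $I=\mathfrak a\cdot\mathfrak b$ for some $\mathfrak a,\mathfrak b\in\mathcal I(R)\setminus\{R\}$, and put $d=\operatorname{mdeg}(\mathfrak a)$, $e=\operatorname{mdeg}(\mathfrak b)$, $r=\dim_K\mathfrak a_K[d]$, $s=\dim_K\mathfrak b_K[e]$. Then: (i) $m=d+e$ and $I_K[m]=\mathfrak a_K[d]\cdot\mathfrak b_K[e]$; (ii) $d\ge1$ and $e\ge1$; (iii) $r\ge2$ and $\mathfrak a_K[d]$ has a $K$-basis $\{f_1,\dots,f_r\}$ with $X^d=\operatorname{in}(f_1)>\operatorname{in}(f_2)>\dots>\operatorname{in}(f_r)$; likewise $s\ge 2$ and $\mathfrak b_K[e]$ has a $K$-basis $\{g_1,\dots,g_s\}$ with $X^e=\operatorname{in}(g_1)>\dots>\operatorname{in}(g_s)$; (iv) for every $j\in[2,r]$ there is $a_j\in[1,d]$ with $\operatorname{in}(f_j)=X^{d-a_j}Y^{a_j}$, and for every $k\in[2,s]$ there is $b_k\in[1,e]$ with $\operatorname{in}(g_k)=X^{e-b_k}Y^{b_k}$; (v) setting $a_1=b_1=0$, for every $j\in[1,r]$ and $k\in[1,s]$ we have $X^{m-(a_j+b_k)}Y^{a_j+b_k}\in\{X^m,Y^m\}\cup\mathcal N$.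
   Context: Let $D$ be an integral domain with quotient field $K$, $N\ge 2$, $R=D[X_1,\dots,X_N]$, $S=K[X_1,\dots,X_N]$, and write $X=X_1$, $Y=X_2$. $\mathcal I(R)$ denotes the monoid of nonzero ideals of $R$ under ideal multiplication (identity $R$; its only unit is $R$). Standing assumption: $\mathcal I(R)$ is a BF-monoid (every element is a product of atoms and has finitely many factorization lengths). For $[x,y]$ with integers $x\le y$ we mean $\{z\in\mathbb Z: x\le z\le y\}$. With the standard grading, every $f\in S$ is uniquely $f=\sum_{t\ge0}f_t$ with $f_t$ homogeneous of degree $t$; the min-degree $\operatorname{mdeg}(f)$ of $f\ne0$ is the least $t$ with $f_t\ne0$, and for a nonzero ideal $J$ of $R$, $\operatorname{mdeg}(J)$ is the least min-degree of a nonzero element of $J$. For $J\in\mathcal I(R)$ and $i\in\mathbb N$, $J[i]=\{f_i: f\in J\}$ and $J_K[i]$ is the $K$-linear span of $J[i]$ in $S$; the product $V\cdot W$ of two such spaces is the $K$-span of all products. $\operatorname{in}(f)$ is the largest monomial occurring in $f$ with nonzero coefficient for the lexicographic order with $X_1>X_2>\dots>X_N$. *)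

From mathcomp Require Import all_boot all_algebra.
From mathcomp Require Import fraction.
From mathcomp Require Export mpoly.

Set Implicit Arguments.
Unset Strict Implicit.
Unset Printing Implicit Defensive.

Import GRing.Theory.
Local Open Scope ring_scope.

Section Ideals.
Variable A : comNzRingType.

Definition is_ideal (I : A -> Prop) : Prop :=
  [/\ I 0, (forall x y, I x -> I y -> I (x + y)) &
      (forall r x, I x -> I (r * x))].

(* element of the monoid I(A) : a nonzero ideal *)
Definition nonzero_ideal (I : A -> Prop) : Prop :=
  is_ideal I /\ exists f, I f /\ f != 0.

Definition ideal_eq (I J : A -> Prop) : Prop := forall x, I x <-> J x.

Definition unit_ideal : A -> Prop := fun _ => True.

Definition gen_ideal (G : A -> Prop) : A -> Prop := fun f =>
  exists (rs gs : seq A), size rs = size gs /\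
    (forall g, g \in gs -> G g) /\
    f = \sum_(i < size gs) rs`_i * gs`_i.

Definition ideal_mul (I J : A -> Prop) : A -> Prop :=
  gen_ideal (fun h => exists a b, I a /\ J b /\ h = a * b).

Definition ideal_prod (l : seq (A -> Prop)) : A -> Prop :=
  foldr ideal_mul unit_ideal l.

(* atoms of the monoid I(A) (whose only unit is A itself) *)
Definition ideal_atom (I : A -> Prop) : Prop :=
  [/\ nonzero_ideal I, ~ ideal_eq I unit_ideal &
      forall J K, nonzero_ideal J -> nonzero_ideal K ->
        ideal_eq I (ideal_mul J K) ->
        ideal_eq J unit_ideal \/ ideal_eq K unit_ideal].

Definition is_factorization (I : A -> Prop) (l : seq (A -> Prop)) : Prop :=
  (forall k, (k < size l)%N -> ideal_atom (nth unit_ideal l k)) /\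
  ideal_eq I (ideal_prod l).

(* I(A) is a BF-monoid: every element is a product of atoms and the set
   of factorization lengths is finite (equivalently, bounded). *)
Definition BF_ideals : Prop :=
  forall I, nonzero_ideal I ->
    (exists l, is_factorization I l) /\
    (exists B : nat, forall l, is_factorization I l -> (size l <= B)%N).

End Ideals.

Section Grading.
Variables (R : nzRingType) (N : nat).

Definition hcomp (f : {mpoly R[N]}) (t : nat) : {mpoly R[N]} :=
  \sum_(mm <- msupp f | mdeg mm == t) f@_mm *: 'X_[mm].

(* min-degree of a nonzero polynomial: mindeg f t <-> mdeg(f) = t *)
Definition mindeg (f : {mpoly R[N]}) (t : nat) : Prop :=
  f != 0 /\ hcomp f t != 0 /\ (forall t', (t' < t)%N -> hcomp f t' = 0).

(* is_mdeg J d <-> mdeg(J) = d for a nonzero ideal J *)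
Definition is_mdeg (J : {mpoly R[N]} -> Prop) (d : nat) : Prop :=
  (exists f, [/\ J f, f != 0 & mindeg f d]) /\
  (forall f t, J f -> f != 0 -> mindeg f t -> (d <= t)%N).

(* lexicographic order on monomials with X_1 > X_2 > ... > X_N *)
Definition lexlt (m1 m2 : 'X_{1..N}) : bool :=
  [exists i : 'I_N, [forall j : 'I_N, (j < i)%N ==> (m1 j == m2 j)]
                     && (m1 i < m2 i)%N].

(* in(f): the lex-largest monomial of f (f <> 0) *)
Definition inm (f : {mpoly R[N]}) : 'X_{1..N} :=
  foldr (fun mm acc => if lexlt acc mm then mm else acc) 0%MM (msupp f).

End Grading.

Section Span.
Variables (K : fieldType) (N : nat).
Local Notation S := {mpoly K[N]}.

Definition kspan (V : S -> Prop) : S -> Prop := fun g =>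
  exists (cs : seq K) (vs : seq S), size cs = size vs /\
    (forall v, v \in vs -> V v) /\
    g = \sum_(i < size vs) cs`_i *: vs`_i.

Definition spmul (V W : S -> Prop) : S -> Prop :=
  kspan (fun h => exists v w, V v /\ W w /\ h = v * w).

Definition lin_indep (bs : seq S) : Prop :=
  forall cs : seq K, size cs = size bs ->
    \sum_(i < size bs) cs`_i *: bs`_i = 0 ->
    forall i, (i < size bs)%N -> cs`_i = 0.

Definition is_basis (V : S -> Prop) (bs : seq S) : Prop :=
  [/\ forall b, b \in bs -> V b, lin_indep bs &
      forall v, V v -> exists cs : seq K, size cs = size bs /\
        v = \sum_(i < size bs) cs`_i *: bs`_i].

Definition is_dim (V : S -> Prop) (r : nat) : Prop :=
  exists bs, size bs = r /\ is_basis V bs.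

End Span.

(* R = D[X_1..X_N] and S = K[X_1..X_N] with K = {fraction D}, N = n.+2. *)
Section Ext.
Variables (D : idomainType) (n : nat).

Definition extK (f : {mpoly D[n.+2]}) : {mpoly {fraction D}[n.+2]} :=
  map_mpoly (@FracField.tofrac D) f.

Definition JK (J : {mpoly D[n.+2]} -> Prop) (i : nat)
  : {mpoly {fraction D}[n.+2]} -> Prop :=
  kspan (fun g => exists f, J f /\ g = extK (hcomp f i)).

End Ext.

Definition varX (R : nzRingType) (n : nat) : {mpoly R[n.+2]} :=
  'X_(@Ordinal n.+2 0 isT).
Definition varY (R : nzRingType) (n : nat) : {mpoly R[n.+2]} :=
  'X_(@Ordinal n.+2 1 isT).

From mathcomp Require Import all_boot all_order all_algebra.
From mathcomp Require Import fraction mpoly ring.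
From Stdlib Require Import Classical.

Set Implicit Arguments.
Unset Strict Implicit.
Unset Printing Implicit Defensive.

Import GRing.Theory Order.TTheory.
Local Open Scope ring_scope.

(* All generators of I = (X^m, Y^m, N) = a b are monomials X^(m-i) Y^i.
   Lowest-degree forms multiply, so m = d + e and I_K[m] = a_K[d] b_K[e].
   If d = 0, then a contains p with p(0) <> 0; since I is a monomial ideal,
   p b <= I forces b <= I, so I = a b <= a I and the determinant trick puts 1
   in a.  Hence d, e >= 1.
   Take bases f_j of a_K[d] and g_k of b_K[e] with strictly decreasing leading
   monomials.  Each f_j g_k lies in I_K[m], whose elements are supported on the
   allowed monomials X^(m-i) Y^i; so in(f_j) + in(g_k) is allowed, which makes
   every in(f_j) of the form X^(d-a_j) Y^(a_j) and gives (v).  Since X^m lies in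
   I_K[m], in(f_1) = X^d; since Y^m does too, a_K[d] cannot be a line K f_1,
   for then X^d would divide Y^m. *)

Section LinComb.
Variables (R : pzRingType) (V : lmodType R).
Implicit Types (G W : V -> Prop) (vs ws : seq V).

Definition submodule W :=
  [/\ W 0, forall x y, W x -> W y -> W (x + y) & forall c x, W x -> W (c *: x)].

(* Both [kspan] and [gen_ideal G] (over the regular module [A^o]) are [lincomb]
   by conversion, so ideals are the submodules of [A^o]. *)
Definition lincomb G v := exists (cs : seq R) vs, size cs = size vs /\
  (forall g, g \in vs -> G g) /\ v = \sum_(i < size vs) cs`_i *: vs`_i.

Lemma sum_nth_cat (cs1 cs2 : seq R) vs1 vs2 : size cs1 = size vs1 ->
  \sum_(i < size (vs1 ++ vs2)) (cs1 ++ cs2)`_i *: (vs1 ++ vs2)`_i =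
  \sum_(i < size vs1) cs1`_i *: vs1`_i + \sum_(i < size vs2) cs2`_i *: vs2`_i.
Proof.
move=> hs; rewrite size_cat big_split_ord /=; congr (_ + _).
  by apply: eq_bigr => i _; rewrite !nth_cat /= hs ltn_ord.
by apply: eq_bigr => i _; rewrite !nth_cat /= hs ltnNge leq_addr /= addKn.
Qed.

Lemma lincomb_gen G v : G v -> lincomb G v.
Proof.
move=> Gv; exists [:: 1], [:: v]; do 2!split => //.
  by move=> x; rewrite inE => /eqP ->.
by rewrite big_ord1 scale1r.
Qed.

Lemma lincomb_submodule G : submodule (lincomb G).
Proof.
split.
- by exists [::], [::]; rewrite big_ord0.
- move=> _ _ [cs1 [vs1 [h1 [G1 ->]]]] [cs2 [vs2 [h2 [G2 ->]]]].
  exists (cs1 ++ cs2), (vs1 ++ vs2); split; first by rewrite !size_cat h1 h2.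
  split; last by rewrite sum_nth_cat.
  by move=> g; rewrite mem_cat => /orP[/G1|/G2].
- move=> c _ [cs [vs [h [Gvs ->]]]]; exists [seq c * x | x <- cs], vs.
  rewrite size_map; do 2!split => //; rewrite scaler_sumr; apply: eq_bigr => i _.
  by rewrite (nth_map 0) ?h // scalerA.
Qed.

Lemma lincomb0 G : lincomb G 0.
Proof. by case: (lincomb_submodule G). Qed.

Lemma lincomb_lin G c x y : lincomb G x -> lincomb G y -> lincomb G (x + c *: y).
Proof. by case: (lincomb_submodule G) => _ LD LZ Gx Gy; apply/LD/LZ. Qed.

Lemma lincomb_min G W : submodule W -> (forall g, G g -> W g) ->
  forall v, lincomb G v -> W v.
Proof.
move=> [W0 WD WZ] GW _ [cs [vs [_ [Gvs ->]]]].
by elim/big_ind: _ => // i _; apply/WZ/GW/Gvs/mem_nth.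
Qed.

Lemma lincomb_idem G v : lincomb (lincomb G) v -> lincomb G v.
Proof. by apply: lincomb_min => //; apply: lincomb_submodule. Qed.

Definition lspan vs := lincomb (fun x => x \in vs).

Lemma lspan_mem vs x : x \in vs -> lspan vs x.
Proof. exact: lincomb_gen. Qed.

Lemma lspanS vs ws : (forall x, x \in vs -> lspan ws x) ->
  forall v, lspan vs v -> lspan ws v.
Proof. by apply: lincomb_min; apply: lincomb_submodule. Qed.

Lemma lspan_subset vs ws : {subset vs <= ws} -> forall v, lspan vs v -> lspan ws v.
Proof. by move=> sub; apply: lspanS => x /sub /lspan_mem. Qed.

Lemma lspanP vs v : lspan vs v ->
  exists cs : seq R, size cs = size vs /\ v = \sum_(i < size vs) cs`_i *: vs`_i.
Proof.
pose W v := exists cs : seq R, size cs = size vs /\ v = \sum_(i < size vs) cs`_i *: vs`_i.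
apply: (@lincomb_min _ W) => [|x xvs]; last first.
  exists (mkseq (fun i => (i == index x vs)%:R) (size vs)); rewrite size_mkseq; split=> //.
  have xi : (index x vs < size vs)%N by rewrite index_mem.
  rewrite (bigD1 (Ordinal xi)) //= big1 => [|i].
    by rewrite nth_mkseq // eqxx scale1r nth_index ?addr0.
  by rewrite -(inj_eq val_inj) nth_mkseq //= => /negbTE ->; rewrite scale0r.
split.
- exists (nseq (size vs) 0); rewrite size_nseq; split=> //.
  by rewrite big1 // => i _; rewrite nth_nseq if_same scale0r.
- move=> _ _ [c1 [h1 ->]] [c2 [h2 ->]].
  exists (mkseq (fun i => c1`_i + c2`_i) (size vs)); rewrite size_mkseq; split=> //.
  by rewrite -big_split; apply: eq_bigr => i _; rewrite nth_mkseq // scalerDl.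
- move=> c _ [c1 [h1 ->]].
  exists (mkseq (fun i => c * c1`_i) (size vs)); rewrite size_mkseq; split=> //.
  by rewrite scaler_sumr; apply: eq_bigr => i _; rewrite nth_mkseq // scalerA.
Qed.

End LinComb.

Lemma lincomb_mul2 (R : pzRingType) (V : algType R) (G H W : V -> Prop) :
  submodule W -> (forall g h, G g -> H h -> W (g * h)) ->
  forall v w, lincomb G v -> lincomb H w -> W (v * w).
Proof.
move=> [W0 WD WZ] GHW v w Gv.
pose Wl v := forall w, lincomb H w -> W (v * w).
have subWl : submodule Wl.
  split=> [w' _|x y hx hy w' hw'|c x hx w' hw']; first by rewrite mul0r.
    by rewrite mulrDl; apply: WD; [apply: hx | apply: hy].
  by rewrite -scalerAl; apply/WZ/hx.
apply: (lincomb_min subWl _ Gv) => g Gg; apply: lincomb_min => [|h Hh]; last exact: GHW.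
split=> [|x y|c x]; first by rewrite mulr0.
  by rewrite mulrDr; apply: WD.
by rewrite -scalerAr; apply: WZ.
Qed.

Section Ideals.
Variable A : comNzRingType.
Implicit Types (G J : A -> Prop).

Lemma gen_ideal_gen G g : G g -> gen_ideal G g.
Proof. exact: (@lincomb_gen _ A^o). Qed.

Lemma gen_ideal_is_ideal G : is_ideal (gen_ideal G).
Proof. exact: (@lincomb_submodule _ A^o). Qed.

Lemma gen_ideal_min G J : is_ideal J -> (forall g, G g -> J g) ->
  forall f, gen_ideal G f -> J f.
Proof. exact: (@lincomb_min _ A^o). Qed.

Lemma ideal_mul_mul J J' x y : J x -> J' y -> ideal_mul J J' (x * y).
Proof. by move=> Jx J'y; apply: gen_ideal_gen; exists x, y. Qed.

Lemma ideal_mulC J J' f : ideal_mul J J' f -> ideal_mul J' J f.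
Proof.
apply: gen_ideal_min; first exact: gen_ideal_is_ideal.
by move=> _ [x [y [Jx [J'y ->]]]]; rewrite mulrC; apply: ideal_mul_mul.
Qed.

Lemma ideal_eq_mulC I J J' : ideal_eq I (ideal_mul J J') -> ideal_eq I (ideal_mul J' J).
Proof. by move=> IJ x; split=> [/IJ /ideal_mulC | /ideal_mulC /IJ]. Qed.

End Ideals.

(** * Homogeneous components and min-degree *)

Section Homog.
Variables (R : comNzRingType) (N : nat).
Implicit Types (f g : {mpoly R[N]}) (J : {mpoly R[N]} -> Prop).

Lemma mcoeff_hcomp f t u : (hcomp f t)@_u = if mdeg u == t then f@_u else 0.
Proof.
rewrite /hcomp raddf_sum /=.
under eq_bigr do rewrite mcoeffZ mcoeffX.
rewrite big_mkcond /=.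
have [fu|fu] := boolP (u \in msupp f).
  rewrite (bigD1_seq u) //= ?msupp_uniq // eqxx mulr1 big1 ?addr0; first by case: ifP.
  by move=> v /negbTE ->; rewrite mulr0; case: ifP.
rewrite big1_seq ?memN_msupp_eq0 //; first by case: ifP.
move=> v /andP [_ fv]; have -> : (v == u) = false by apply: contraNF fu => /eqP <-.
by rewrite mulr0; case: ifP.
Qed.

Lemma hcomp0 t : hcomp 0 t = 0 :> {mpoly R[N]}.
Proof. by apply/mpolyP => u; rewrite mcoeff_hcomp !mcoeff0 if_same. Qed.

Lemma hcompD f g t : hcomp (f + g) t = hcomp f t + hcomp g t.
Proof.
by apply/mpolyP => u; rewrite mcoeffD !mcoeff_hcomp mcoeffD; case: ifP; rewrite ?addr0.
Qed.

Lemma hcomp_homog f t : hcomp f t \is t.-homog.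
Proof.
apply/dhomogP => u; rewrite mcoeff_msupp mcoeff_hcomp.
by case: (mdeg u =P t); rewrite ?eqxx.
Qed.

Lemma hcomp_id f d : f \is d.-homog -> hcomp f d = f.
Proof.
move=> fd; apply/mpolyP => u; rewrite mcoeff_hcomp.
by case: eqP => // /eqP ne; rewrite (dhomog_nemf_coeff fd ne).
Qed.

(* [f = 0] or [mdeg f >= k] *)
Definition vanish_below f k := forall u, (mdeg u < k)%N -> f@_u = 0.

Lemma vanish_belowW f k l : (l <= k)%N -> vanish_below f k -> vanish_below f l.
Proof. by move=> lk fk u ul; apply/fk/(leq_trans ul). Qed.

Lemma vanish_belowD f g k :
  vanish_below f k -> vanish_below g k -> vanish_below (f + g) k.
Proof. by move=> fk gk u uk; rewrite mcoeffD fk // gk // addr0. Qed.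

Lemma vanish_belowM f g k l :
  vanish_below f k -> vanish_below g l -> vanish_below (f * g) (k + l).
Proof.
move=> fk gl u ukl; apply/eqP; rewrite -[_ == 0]negbK -mcoeff_msupp.
apply/negP => /msuppM_le /allpairsP [[u1 u2] /= [u1f u2g uE]].
move: ukl; rewrite uE mdegD; case: (ltnP (mdeg u1) k) => [lt1|le1].
  by move: u1f; rewrite mcoeff_msupp fk ?eqxx.
case: (ltnP (mdeg u2) l) => [lt2|le2]; first by move: u2g; rewrite mcoeff_msupp gl ?eqxx.
by rewrite ltnNge leq_add.
Qed.

Lemma vanish_belowMl f g k : vanish_below g k -> vanish_below (f * g) k.
Proof. by rewrite -[k]add0n; apply: vanish_belowM. Qed.

Lemma vanish_below_is_ideal k : is_ideal (vanish_below ^~ k).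
Proof.
split=> [u _|f g|f g gk]; [exact: mcoeff0 | exact: vanish_belowD | exact: vanish_belowMl].
Qed.

Lemma vanish_belowP f k :
  vanish_below f k <-> forall t, (t < k)%N -> hcomp f t = 0.
Proof.
split=> [fk t tk|fk u uk].
  apply/mpolyP => u; rewrite mcoeff_hcomp mcoeff0.
  by case: eqP => // ut; apply: fk; rewrite ut.
by have /mpolyP/(_ u) := fk _ uk; rewrite mcoeff_hcomp eqxx mcoeff0.
Qed.

Lemma vanish_below_hcomp f d : vanish_below (hcomp f d) d.
Proof.
by move=> u ud; rewrite mcoeff_hcomp; case: eqP => // du; rewrite du ltnn in ud.
Qed.

Lemma vanish_below_subr_hcomp f d :
  vanish_below f d -> vanish_below (f - hcomp f d) d.+1.
Proof.
move=> fd u; rewrite ltnS leq_eqVlt mcoeffB mcoeff_hcomp.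
by case: eqP => [_|_ /= /fd ->]; rewrite ?subrr ?subr0.
Qed.

Lemma hcompM_vanish f g d e : vanish_below f d -> vanish_below g e ->
  hcomp (f * g) (d + e) = hcomp f d * hcomp g e.
Proof.
move=> fd ge; set f1 := f - hcomp f d; set g1 := g - hcomp g e.
have -> : f * g = hcomp f d * hcomp g e + (hcomp f d * g1 + (f1 * hcomp g e + f1 * g1)).
  by rewrite /f1 /g1; ring.
have f1d := vanish_below_subr_hcomp fd; have g1e := vanish_below_subr_hcomp ge.
have /vanish_belowP V1 : vanish_below (hcomp f d * g1) (d + e).+1.
  by rewrite -addnS; apply: vanish_belowM => //; apply: vanish_below_hcomp.
have /vanish_belowP V2 : vanish_below (f1 * hcomp g e) (d + e).+1.
  by rewrite -addSn; apply: vanish_belowM => //; apply: vanish_below_hcomp.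
have /vanish_belowP V3 : vanish_below (f1 * g1) (d + e).+1.
  apply: (vanish_belowW (k := d.+1 + e.+1)); last exact: vanish_belowM.
  by rewrite addSn addnS ltnW.
rewrite !hcompD V1 // V2 // V3 // !addr0.
by rewrite hcomp_id // dhomogM // hcomp_homog.
Qed.

Lemma mindegE f t : mindeg f t <-> vanish_below f t /\ hcomp f t != 0.
Proof.
split=> [[_ [ft fk]]|[fk ft]]; first by split=> //; apply/vanish_belowP.
split; last by split=> //; apply/vanish_belowP.
by apply: contraNneq ft => ->; rewrite hcomp0.
Qed.

Lemma hcomp_mdeg_neq0 f u : f@_u != 0 -> hcomp f (mdeg u) != 0.
Proof.
by apply: contra => /eqP/mpolyP/(_ u); rewrite mcoeff_hcomp eqxx mcoeff0 => ->.
Qed.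

Lemma mindeg_lt f k : ~ vanish_below f k -> exists2 t, (t < k)%N & mindeg f t.
Proof.
move=> fk.
have [u [uk fu]] : exists u, (mdeg u < k)%N /\ f@_u != 0.
  apply: NNPP => nex; apply: fk => u uk; apply/eqP/negPn/negP => fu.
  by apply: nex; exists u.
have ex : exists t, hcomp f t != 0 by exists (mdeg u); apply: hcomp_mdeg_neq0.
case: (ex_minnP ex) => t ft tmin; exists t.
  exact/(leq_ltn_trans _ uk)/tmin/hcomp_mdeg_neq0.
apply/mindegE; split=> //; apply/vanish_belowP => t' t't.
by apply/eqP/negPn/negP => /tmin; rewrite leqNgt t't.
Qed.

Lemma mindeg0_mcoeff0 f : mindeg f 0 -> f@_0%MM != 0.
Proof.
case=> _ [+ _]; apply: contra => /eqP f0; apply/eqP/mpolyP => u.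
by rewrite mcoeff_hcomp mcoeff0; case: eqP => // /eqP; rewrite mdeg_eq0 => /eqP ->.
Qed.

Lemma is_mdeg_vanish J d : is_mdeg J d -> forall f, J f -> vanish_below f d.
Proof.
move=> [_ dmin] f Jf; apply: NNPP => /mindeg_lt [t td ft].
by have := dmin f t Jf (proj1 ft) ft; rewrite leqNgt td.
Qed.

Lemma is_mdegP J d : (forall f, J f -> vanish_below f d) ->
  (exists2 f, J f & hcomp f d != 0) -> is_mdeg J d.
Proof.
move=> Jd [f Jf fd]; have fmd : mindeg f d by apply/mindegE; split=> //; apply: Jd.
split; first by exists f; split=> //; case: fmd.
move=> g t Jg _ /mindegE [_]; rewrite leqNgt; apply: contraNN => td.
by apply/eqP; move/vanish_belowP: (Jd g Jg); apply.
Qed.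

Lemma is_mdeg_uniq J d d' : is_mdeg J d -> is_mdeg J d' -> d = d'.
Proof.
move=> [[f [Jf f0 fd]] dmin] [[g [Jg g0 gd']] d'min].
by apply/eqP; rewrite eqn_leq (dmin g d' Jg g0 gd') (d'min f d Jf f0 fd).
Qed.

Lemma is_mdeg_eq J J' d : ideal_eq J J' -> is_mdeg J d -> is_mdeg J' d.
Proof.
move=> JJ' [[f [Jf f0 fd]] dmin]; split; first by exists f; split=> //; apply/JJ'.
by move=> g t /JJ'; apply: dmin.
Qed.

End Homog.

Lemma is_mdeg_mul (R : idomainType) N (a b : {mpoly R[N]} -> Prop) d e :
  is_mdeg a d -> is_mdeg b e -> is_mdeg (ideal_mul a b) (d + e).
Proof.
move=> ad be; apply: is_mdegP.
  apply: (gen_ideal_min (vanish_below_is_ideal _ _ _)) => _ [x [y [ax [by_ ->]]]].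
  by apply: vanish_belowM; [apply: is_mdeg_vanish ad _ ax | apply: is_mdeg_vanish be _ by_].
case: ad be => [[f [af _ /mindegE [fd f0]]] _] [[g [bg _ /mindegE [ge g0]]] _].
by exists (f * g); [apply: ideal_mul_mul | rewrite hcompM_vanish // mulf_neq0].
Qed.

(** * Monomial orders and monomial ideals *)

Section MonomialOrder.
Variable N : nat.
Implicit Types (u v : 'X_{1..N}).

Lemma lexltE u v : mdeg u = mdeg v -> lexlt u v = (u < v)%O.
Proof.
move=> uv; apply/existsP/(ltmcP uv) => [[i /andP [/forallP eqi lti]]|[i eqi lti]].
  by exists i => // j ji; have /implyP/(_ ji)/eqP := eqi j.
by exists i; rewrite lti andbT; apply/forallP => j; apply/implyP => /eqi ->.
Qed.

Lemma lexltxx u : lexlt u u = false.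
Proof. by apply/negbTE/existsP => -[i /andP [_]]; rewrite ltnn. Qed.

Lemma lexlt0 v : v != 0%MM -> lexlt 0%MM v.
Proof.
move=> v0; have ex : exists i, [exists j : 'I_N, (nat_of_ord j == i) && (v j != 0%N)].
  apply: NNPP => nex; move/negP: v0; apply; apply/eqP/mnmP => i.
  rewrite mnm0E; apply/eqP/negPn/negP => vi; apply: nex; exists (nat_of_ord i).
  by apply/existsP; exists i; rewrite eqxx.
case: (ex_minnP ex) => i /existsP [i0 /andP [/eqP i0i vi0]] imin.
apply/existsP; exists i0; rewrite mnm0E lt0n vi0 andbT; apply/forallP => j.
apply/implyP => ji0; rewrite mnm0E eq_sym; apply/negPn/negP => vj.
have : (i <= j)%N by apply: imin; apply/existsP; exists j; rewrite eqxx vj.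
by rewrite leqNgt -i0i ji0.
Qed.

Lemma foldr_lexmax (s : seq 'X_{1..N}) d : all (fun u => mdeg u == d) s ->
  foldr (fun u acc => if lexlt acc u then u else acc) 0%MM s = (\join_(u <- s) u)%O
  /\ (\join_(u <- s) u)%O \in 0%MM :: s.
Proof.
elim: s => [|x s IH] /=; first by rewrite big_nil mem_head.
case/andP => /eqP xd sd; case: (IH sd) => -> js; rewrite big_cons.
set j := (\join_(u <- s) u)%O in js *.
have -> : lexlt j x = (j < x)%O.
  move: js; rewrite inE => /orP [/eqP ->|js].
    have [->|x0] := eqVneq x 0%MM; first by rewrite lexltxx ltxx.
    by rewrite lexlt0 // lt_def x0 le0x.
  by rewrite lexltE // xd; move/allP: sd => /(_ _ js) /eqP.
have -> : (x `|` j)%O = if (j < x)%O then x else j.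
  by rewrite joinEtotal maxElt; case: ltgtP.
split=> //; case: ifP => _; first by rewrite !inE eqxx orbT.
by move: js; rewrite !inE => /orP [->|->]; rewrite ?orbT.
Qed.

Lemma inm_dhomog (R : nzRingType) (f : {mpoly R[N]}) d :
  f \is d.-homog -> inm f = mlead f.
Proof.
move=> /dhomogP fd; have sd : all (fun u => mdeg u == d) (msupp f).
  by apply/allP => u /fd ->.
by case: (foldr_lexmax sd).
Qed.

Lemma ltmc_addl u v : u != 0%MM -> (v < (u + v)%MM)%O.
Proof.
move=> u0; rewrite lt_def lemc_addl andbT; apply: contra u0 => /eqP/(congr1 mdeg).
by rewrite mdegD -{2}[mdeg v]add0n => /addIn/eqP; rewrite mdeg_eq0.
Qed.

Lemma lepm_mdeg_eq u v : (v <= u)%MM -> mdeg v = mdeg u -> v = u.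
Proof.
move=> vu; rewrite -(submK vu) mdegD -[X in X = _]add0n => /addIn /esym/eqP.
by rewrite mdeg_eq0 => /eqP ->; rewrite add0m.
Qed.

End MonomialOrder.

Lemma mpolyX_neq0 (R : nzRingType) N (u : 'X_{1..N}) : 'X_[u] != 0 :> {mpoly R[N]}.
Proof.
by apply/eqP => /(congr1 (mcoeff u))/eqP; rewrite mcoeffX eqxx mcoeff0 oner_eq0.
Qed.

Section MonomialIdeal.
Variables (R : idomainType) (N : nat) (P : {mpoly R[N]} -> Prop).
Hypothesis monP : forall p, P p -> exists u, p = 'X_[u].

Definition gen_divides (u : 'X_{1..N}) := exists2 w, P 'X_[w] & (w <= u)%MM.

Lemma gen_dividesW u v : gen_divides u -> (u <= v)%MM -> gen_divides v.
Proof. by move=> [w Pw wu] uv; exists w => //; apply: lepm_trans uv. Qed.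

Lemma msupp_gen_ideal f : gen_ideal P f -> forall u, u \in msupp f -> gen_divides u.
Proof.
apply: (gen_ideal_min (J := fun f => forall u, u \in msupp f -> gen_divides u)).
  split=> [u|x y xd yd u|c x xd u]; first by rewrite msupp0.
    by move/msuppD_le; rewrite mem_cat => /orP [/xd|/yd].
  move=> /msuppM_le /allpairsP [[u1 u2] /= [_ u2x ->]].
  exact/(gen_dividesW (xd _ u2x))/lem_addl.
move=> p Pp u; have [w pE] := monP Pp.
by rewrite pE msuppX inE => /eqP ->; exists w; rewrite -?pE ?lepm_refl.
Qed.

Lemma gen_ideal_msupp f : (forall u, u \in msupp f -> gen_divides u) -> gen_ideal P f.
Proof.
move=> fd; rewrite [f]mpolyE big_seq; have [I0 ID IM] := gen_ideal_is_ideal P.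
apply: (big_ind (gen_ideal P)) => // u /fd [w Pw wu].
by rewrite -(submK wu) mpolyXD scalerAl; apply/IM/gen_ideal_gen.
Qed.

(* Induction on the monomial order: the least monomial of [g] outside the ideal
   would survive in [p * g] with coefficient [p@_0 * g@_u]. *)
Lemma gen_ideal_cancel p g : p@_0%MM != 0 -> gen_ideal P (p * g) -> gen_ideal P g.
Proof.
move=> p0 pg; apply: gen_ideal_msupp => u; elim/(@ltmwf N): u => u IH gu.
apply: NNPP => ndiv; set p' := p - (p@_0%MM)%:MP.
have pgE : p * g = p@_0%MM *: g + p' * g by rewrite mulrBl mul_mpolyC addrC subrK.
have p'g0 : (p' * g)@_u = 0.
  apply/eqP/negPn/negP; rewrite -mcoeff_msupp.
  move=> /msuppM_le /allpairsP [[u1 u2] /= [u1p' u2g uE]].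
  have u10 : u1 != 0%MM.
    apply: contraTneq u1p' => ->.
    by rewrite mcoeff_msupp mcoeffB mcoeffC eqxx mulr1 subrr eqxx.
  apply/ndiv/(gen_dividesW (IH u2 _ u2g)); first by rewrite uE ltmc_addl.
  by rewrite uE lem_addl.
apply/ndiv/(msupp_gen_ideal pg); rewrite mcoeff_msupp pgE mcoeffD p'g0 addr0 mcoeffZ.
by rewrite mulf_neq0 // -mcoeff_msupp.
Qed.

End MonomialIdeal.

Definition ox n : 'I_n.+2 := @Ordinal n.+2 0 isT.
Definition oy n : 'I_n.+2 := @Ordinal n.+2 1 isT.

(* The exponent of X^(m - i) Y^i; truncated subtraction makes it X^0 Y^i for i > m. *)
Definition monXY n m i : 'X_{1..n.+2} := (U_(ox n) *+ (m - i) + U_(oy n) *+ i)%MM.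

Section MonXY.
Variable n : nat.
Local Notation ox := (ox n).
Local Notation oy := (oy n).
Local Notation monXY := (monXY n).
Implicit Types (u v : 'X_{1..n.+2}).

Lemma mpolyX_monXY (R : comNzRingType) m i :
  'X_[monXY m i] = varX R n ^+ (m - i) * varY R n ^+ i.
Proof. by rewrite mpolyXD -!mpolyXn. Qed.

Lemma monXYE m i j :
  monXY m i j = if j == ox then (m - i)%N else if j == oy then i else 0%N.
Proof.
rewrite mnmDE !mulmnE !mnm1E -!val_eqE /=.
by case: j => [[|[|j]] hj] /=; rewrite ?mul1n ?mul0n ?addn0.
Qed.

Lemma monXY_x m i : monXY m i ox = (m - i)%N. Proof. by rewrite monXYE eqxx. Qed.
Lemma monXY_y m i : monXY m i oy = i. Proof. by rewrite monXYE. Qed.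

Lemma mdeg_monXY m i : (i <= m)%N -> mdeg (monXY m i) = m.
Proof. by move=> im; rewrite mdegD !mdegMn !mdeg1 !mul1n subnK. Qed.

Lemma monXY_lt0 m i : (0 < i <= m)%N -> (monXY m i < monXY m 0)%O.
Proof.
case/andP=> i0 im; rewrite -lexltE ?mdeg_monXY //.
apply/existsP; exists ox; apply/andP; split; first by apply/forallP => -[].
by rewrite !monXY_x subn0 ltn_subrL i0 (leq_trans i0 im).
Qed.

Lemma monXY_of_mdeg u : (forall j, j != ox -> j != oy -> u j = 0%N) ->
  u = monXY (mdeg u) (u oy).
Proof.
move=> uxy; have degu : mdeg u = (u ox + u oy)%N.
  rewrite mdegE (bigD1 ox) //= (bigD1 oy) //= big1 ?addn0 //.
  by move=> j /andP [jy jx]; apply: uxy.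
apply/mnmP => j; rewrite monXYE degu addnK.
by case: eqVneq => [->|jx] //; case: eqVneq => [->|jy] //; apply: uxy.
Qed.

Lemma monXY_addm u v m i : (u + v)%MM = monXY m i -> u = monXY (mdeg u) (u oy).
Proof.
move=> uvE; apply: monXY_of_mdeg => j jx jy.
have /eqP := congr1 (fun w : 'X_{1..n.+2} => w j) uvE.
by rewrite /= mnmDE monXYE (negbTE jx) (negbTE jy) addn_eq0 => /andP [/eqP].
Qed.

End MonXY.

Section Ext.
Variables (D : idomainType) (n : nat).
Local Notation RR := {mpoly D[n.+2]}.
Local Notation SS := {mpoly {fraction D}[n.+2]}.
Implicit Types (I J a b : RR -> Prop).

Lemma mcoeff_extK (f : RR) u : (extK f)@_u = FracField.tofrac f@_u.
Proof. exact: mcoeff_map_mpoly. Qed.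

Lemma extK_hcomp (f : RR) t : extK (hcomp f t) = hcomp (extK f) t.
Proof.
apply/mpolyP => u; rewrite mcoeff_extK !mcoeff_hcomp mcoeff_extK.
by case: ifP; rewrite ?tofrac0.
Qed.

Lemma JK_dhomog J i v : JK J i v -> v \is i.-homog.
Proof.
apply: (@lincomb_min _ _ _ (fun v => v \is i.-homog)) => [|_ [f [_ ->]]].
  by split=> [|x y|c x]; [apply: rpred0 | apply: rpredD | apply: rpredZ].
by rewrite extK_hcomp hcomp_homog.
Qed.

Lemma JK_hcomp J i f : J f -> JK J i (extK (hcomp f i)).
Proof. by move=> Jf; apply: lincomb_gen; exists f. Qed.

Lemma JK_mul I a b d e : ideal_eq I (ideal_mul a b) -> is_ideal a ->
  is_mdeg a d -> is_mdeg b e -> ideal_eq (JK I (d + e)) (spmul (JK a d) (JK b e)).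
Proof.
move=> Iab [a0 aD aM] ad be v; split.
- have [W0 WD WZ] := lincomb_submodule
    (fun h => exists v w, JK a d v /\ JK b e w /\ h = v * w).
  (* quantifying over the multiplier [r] makes [W] an ideal *)
  pose W f := forall r, spmul (JK a d) (JK b e) (extK (hcomp (r * f) (d + e))).
  suff abW : forall f, ideal_mul a b f -> W f.
    apply: lincomb_min => [|_ [f [/Iab /abW fW ->]]]; first exact: lincomb_submodule.
    by have := fW 1; rewrite mul1r.
  apply: gen_ideal_min => [|_ [x [y [ax [by_ ->]]]] r].
    split=> [r|x y xW yW r|r' x xW r]; first by rewrite mulr0 hcomp0 /extK rmorph0.
      by rewrite mulrDr hcompD /extK rmorphD; apply: WD; [apply: xW | apply: yW].
    by rewrite mulrA; apply: xW.
  have arx : a (r * x) by apply: aM.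
  rewrite mulrA (hcompM_vanish (is_mdeg_vanish ad arx) (is_mdeg_vanish be by_)).
  apply: lincomb_gen; exists (extK (hcomp (r * x) d)), (extK (hcomp y e)).
  by rewrite /extK rmorphM; do !split => //; apply: JK_hcomp.
- apply: lincomb_min => [|_ [v' [w' [av' [bw' ->]]]]]; first exact: lincomb_submodule.
  apply: (lincomb_mul2 (lincomb_submodule _) _ av' bw') => _ _ [x [ax ->]] [y [by_ ->]].
  rewrite /extK -rmorphM -hcompM_vanish; last exact: is_mdeg_vanish be _ by_.
    by apply: JK_hcomp; apply/Iab/ideal_mul_mul.
  exact: is_mdeg_vanish ad _ ax.
Qed.

Lemma JK_gen_msupp (P : RR -> Prop) m :
  (forall p, P p -> exists i, (i <= m)%N /\ p = 'X_[monXY n m i]) ->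
  forall v, JK (gen_ideal P) m v -> forall u, u \in msupp v ->
  exists i, [/\ (i <= m)%N, P 'X_[monXY n m i] & u = monXY n m i].
Proof.
move=> Pmon v; pose W (v : SS) := forall u, u \in msupp v ->
  exists i, [/\ (i <= m)%N, P 'X_[monXY n m i] & u = monXY n m i].
apply: (@lincomb_min _ _ _ W) => [|_ [f [Pf ->]] u].
  split=> [u|x y xs ys u /msuppD_le|c x xs u /msuppZ_le /xs //]; first by rewrite msupp0.
  by rewrite mem_cat => /orP [/xs|/ys].
rewrite mcoeff_msupp mcoeff_extK tofrac_eq0 mcoeff_hcomp.
case: (mdeg u =P m) => [um fu|_]; last by rewrite eqxx.
have monP p : P p -> exists u, p = 'X_[u].
  by move=> /Pmon [i [_ ->]]; exists (monXY n m i).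
have /(msupp_gen_ideal monP Pf) [w Pw wu] : u \in msupp f by rewrite mcoeff_msupp.
have [i [im /(congr1 (@mlead _ _))]] := Pmon _ Pw; rewrite !mleadXm => wE.
exists i; rewrite -wE; split=> //; apply/esym/lepm_mdeg_eq => //.
by rewrite um wE mdeg_monXY.
Qed.
End Ext.

(** * Bases with strictly decreasing leading monomials *)

Section Echelon.
Variables (K : fieldType) (N : nat).
Local Notation S := {mpoly K[N]}.
Implicit Types (v w : S) (vs ws : seq S).

Definition mlead_decr ws := sorted (fun x y : S => (mlead y < mlead x)%O) ws.

Lemma mlead_decr_lt w ws x : mlead_decr (w :: ws) -> x \in ws -> (mlead x < mlead w)%O.
Proof.
move=> /(order_path_min (fun _ _ _ xy yz => lt_trans yz xy)) /allP; exact.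
Qed.

Lemma mlead_decr_head ws x : mlead_decr ws -> x \in ws -> (mlead x <= mlead ws`_0)%O.
Proof.
case: ws => [//|w ws] sw; rewrite inE => /orP [/eqP ->//|xws].
exact/ltW/(mlead_decr_lt sw).
Qed.

Lemma mlead_decr_cons w ws : mlead_decr ws ->
  (forall x, x \in ws -> (mlead x < mlead w)%O) -> mlead_decr (w :: ws).
Proof. by case: ws => [|x ws] //= -> /(_ x (mem_head _ _)) ->. Qed.

Lemma mlead_cancel_lt v w (v' := v - (mleadc v / mleadc w) *: w) :
  v != 0 -> w != 0 -> mlead v = mlead w -> v' != 0 -> (mlead v' < mlead w)%O.
Proof.
move=> v0 w0 vw v'0.
have v'w : (mlead v' <= mlead w)%O.
  by apply: le_trans (mleadB_le _ _) _; rewrite leUx vw lexx mleadZ_le.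
rewrite lt_def v'w andbT; apply/eqP => wv'.
have := mlead_supp v'0; rewrite mcoeff_msupp -wv' mcoeffB mcoeffZ -vw.
by rewrite mulfVK ?subrr ?eqxx // vw mleadc_eq0.
Qed.

(* [ws] is an echelon form of [vs]; the last condition keeps leading monomials
   from growing, so that an element can be prepended to an echelon form. *)
Definition echelon_of vs ws :=
  [/\ mlead_decr ws, 0 \notin ws, (forall x, x \in ws -> lspan vs x),
      (forall x, x \in vs -> lspan ws x) &
      (forall x, x \in ws -> exists2 u, u \in vs & u != 0 /\ (mlead x <= mlead u)%O)].

Lemma echelon_of_cons v v' w ws ws' : mlead_decr (w :: ws) -> w != 0 ->
  v' = 0 \/ (mlead v' < mlead w)%O ->
  (forall x, x \in v' :: ws -> lspan (v :: w :: ws) x) -> lspan (w :: v' :: ws) v ->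
  echelon_of (v' :: ws) ws' -> echelon_of (v :: w :: ws) (w :: ws').
Proof.
move=> sw w0 v'w v'sp vsp [s' n' sp' sp'' b'].
have ltw x : x \in ws' -> (mlead x < mlead w)%O.
  move=> /b' [u]; rewrite inE => /orP [/eqP ->|/(mlead_decr_lt sw) uw] [u0 xu].
    by case: v'w u0 => [->|v'lt _]; [rewrite eqxx | apply: le_lt_trans xu v'lt].
  exact: le_lt_trans xu uw.
have sub x : x \in w :: v' :: ws -> lspan (w :: ws') x.
  rewrite inE => /orP [/eqP ->|/sp'']; first by apply/lspan_mem/mem_head.
  by apply: lspan_subset => y y'; rewrite inE y' orbT.
split.
- exact: mlead_decr_cons.
- by rewrite inE negb_or eq_sym w0.
- move=> x; rewrite inE => /orP [/eqP ->|/sp']; last exact: lspanS.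
  by apply/lspan_mem; rewrite !inE eqxx orbT.
- move=> x; rewrite inE => /orP [/eqP ->|xw]; first exact: lspanS sub _ vsp.
  by apply: sub; move: xw; rewrite !inE => /orP [->|->]; rewrite ?orbT.
- move=> x; rewrite inE => /orP [/eqP ->|/ltw/ltW xw]; exists w;
    by rewrite ?inE ?eqxx ?orbT.
Qed.

(* [v] is put in front of [w :: ws], passed on to [ws], or first has its leading
   term cancelled against [w], according to how [mlead v] compares with [mlead w]. *)
Lemma echelon_of_insert ws v : mlead_decr ws -> 0 \notin ws ->
  exists ws', echelon_of (v :: ws) ws'.
Proof.
elim: ws v => [|w ws IH] v sw nw.
  have [->|v0] := eqVneq v 0.
    by exists [::]; split=> // x; rewrite inE => /eqP ->; apply: lincomb0.
  exists [:: v]; split=> //; rewrite ?inE 1?eq_sym // => x; rewrite inE => /eqP ->.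
  - exact/lspan_mem/mem_head.
  - exact/lspan_mem/mem_head.
  - by exists v; rewrite ?mem_head.
have [w0 nws] : w != 0 /\ 0 \notin ws by move: nw; rewrite inE negb_or eq_sym => /andP.
have {}IH v' := IH v' (path_sorted sw) nws.
case: (ltgtP (mlead w) (mlead v)) => [wv|vw|vw].
- have v0 : v != 0 by apply: contraTneq wv => ->; rewrite mlead0 -leNgt le0m.
  have nv : 0 \notin v :: w :: ws by rewrite inE negb_or eq_sym v0.
  exists (v :: w :: ws); split=> // [|||x xvs]; try exact: lspan_mem.
    apply: mlead_decr_cons => // x; rewrite inE => /orP [/eqP -> //|].
    by move/(mlead_decr_lt sw)/lt_trans; apply.
  by exists x => //; split=> //; apply: contraTneq xvs => ->.
- have [ws' vws'] := IH v; exists (w :: ws'); apply: (echelon_of_cons (v' := v)) => //.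
  - by right.
  - move=> x xvs; apply: lspan_mem; move: xvs.
    by rewrite !inE => /orP [->|->]; rewrite ?orbT.
  - by apply: lspan_mem; rewrite !inE eqxx orbT.
- set c := mleadc v / mleadc w; set v' := v - c *: w.
  have [ws' v'ws'] := IH v'; exists (w :: ws'); apply: (echelon_of_cons (v' := v')) => //.
  - have [->|v'0] := eqVneq v' 0; [by left | right; apply: mlead_cancel_lt => //].
    by apply: contraNneq v'0 => v0; rewrite /v' /c v0 mleadc0 mul0r scale0r subr0.
  - move=> x; rewrite inE => /orP [/eqP ->|xws].
      rewrite /v' -scaleNr.
      by apply: lincomb_lin; apply: lspan_mem; rewrite !inE eqxx ?orbT.
    by apply: lspan_mem; rewrite !inE xws !orbT.
  - rewrite -[v](subrK (c *: w)) -/v'.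
    by apply: lincomb_lin; apply: lspan_mem; rewrite !inE eqxx ?orbT.
Qed.

Lemma echelon_exists vs : exists ws, [/\ mlead_decr ws, 0 \notin ws,
  (forall x, x \in ws -> lspan vs x) & (forall x, x \in vs -> lspan ws x)].
Proof.
elim: vs => [|v vs [ws [sws nws wsvs vsws]]]; first by exists [::].
have [ws' [sws' nws' ws'sp sp'ws' _]] := echelon_of_insert v sws nws.
have vsws' x : x \in vs -> lspan ws' x.
  by move=> /vsws; apply: lspanS => y yws; apply: sp'ws'; rewrite inE yws orbT.
exists ws'; split=> // x.
  move/ws'sp; apply: lspanS => y; rewrite inE => /orP [/eqP ->|/wsvs].
    by apply: lspan_mem; rewrite mem_head.
  by apply: lspan_subset => z zvs; rewrite inE zvs orbT.
by rewrite inE => /orP [/eqP ->|/vsws']; [apply: sp'ws'; rewrite mem_head|].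
Qed.

Lemma mlead_decr_indep ws : mlead_decr ws -> 0 \notin ws -> lin_indep ws.
Proof.
elim: ws => [|w ws IH] sw nw [|c cs] //= /eqP; rewrite eqSS => /eqP cws.
move: nw; rewrite inE negb_or eq_sym => /andP [w0 nws].
rewrite big_ord_recl /= => sum0.
have c0 : c = 0.
  have /eqP := congr1 (mcoeff (mlead w)) sum0.
  rewrite mcoeffD mcoeffZ raddf_sum /= big1 ?addr0 ?mcoeff0 => [|j _].
    by rewrite mulf_eq0 mleadc_eq0 (negbTE w0) orbF => /eqP.
  rewrite mcoeffZ mcoeff_gt_mlead ?mulr0 //.
  by rewrite (mlead_decr_lt sw) // mem_nth ?add0n.
move: sum0; rewrite c0 scale0r add0r => sum0 [|i] //= ics.
exact: (IH (path_sorted sw) nws cs cws sum0).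
Qed.

(* Rows of [C] express [bs] in terms of [ws]; a nonzero vector in the left
   kernel of [C] would give a linear dependence among [bs]. *)
Lemma lin_indep_size_le bs ws : lin_indep bs ->
  (forall b, b \in bs -> lspan ws b) -> (size bs <= size ws)%N.
Proof.
move=> bsind bsws; rewrite leqNgt; apply/negP => wsbs.
set k := size bs; set r := size ws.
have /fin_all_exists [cf cfE] : forall i : 'I_k, exists c : seq K,
    size c = r /\ bs`_i = \sum_(j < r) c`_j *: ws`_j.
  by move=> i; apply/lspanP/bsws/mem_nth.
pose C : 'M[K]_(k, r) := \matrix_(i, j) (cf i)`_j.
have : kermx C != 0.
  rewrite -mxrank_eq0 mxrank_ker subn_eq0 -ltnNge.
  exact: leq_ltn_trans (rank_leq_col C) wsbs.
case/matrix0Pn => i0 [j0 kerij].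
pose x := row i0 (kermx C); pose cs := mkseq (fun i => x 0 (insubd i0 i)) k.
have csE (i : 'I_k) : cs`_i = x 0 i by rewrite nth_mkseq // valKd.
have : \sum_(i < k) cs`_i *: bs`_i = 0.
  transitivity (\sum_(j < r) (x *m C) 0 j *: ws`_j); last first.
    by rewrite /x -row_mul mulmx_ker row0 big1 // => j _; rewrite mxE scale0r.
  under eq_bigr do rewrite csE (proj2 (cfE _)) scaler_sumr.
  rewrite exchange_big /=; apply: eq_bigr => j _; rewrite mxE scaler_suml.
  by apply: eq_bigr => i _; rewrite scalerA !mxE.
move/(bsind cs (size_mkseq _ _))/(_ j0 (ltn_ord j0)).
by rewrite csE mxE => x0; rewrite x0 eqxx in kerij.
Qed.

Lemma echelon_basis V r : is_dim V r -> (forall x, lincomb V x -> V x) ->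
  exists fs, [/\ size fs = r, is_basis V fs, mlead_decr fs & 0 \notin fs].
Proof.
move=> [bs [<- [bsV bsind Vbs]]] Vspan.
have [ws [sws nws wsbs bsws]] := echelon_exists bs.
have wsind := mlead_decr_indep sws nws.
exists ws; split=> //.
  apply/eqP; rewrite eqn_leq lin_indep_size_le //.
  by rewrite lin_indep_size_le // => b /bsws.
split=> // [x /wsbs xbs|v /Vbs [cs [csE vE]]].
  apply/Vspan/(lincomb_min (lincomb_submodule V) _ xbs) => y /bsV; exact: lincomb_gen.
by apply/lspanP/(lspanS bsws); exists cs, bs.
Qed.

End Echelon.

(** * The determinant trick *)

Lemma exists_filter (T : eqType) (s : seq T) (Q : T -> Prop) :
  exists s' : seq T, forall x, x \in s' <-> x \in s /\ Q x.
Proof.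
elim: s => [|y s [s' s'E]]; first by exists [::] => x; split=> [|[]].
have [Qy|nQy] := classic (Q y).
  exists (y :: s') => x; rewrite !inE; split.
    by case/orP => [/eqP ->|/s'E [xs Qx]]; rewrite ?eqxx ?xs ?orbT.
  by case=> /orP [/eqP ->|xs Qx]; rewrite ?eqxx //; apply/orP; right; apply/s'E.
exists s' => x; rewrite inE s'E.
split=> [[xs Qx]|[/orP [/eqP xy|xs] Qx]]; rewrite ?xs ?orbT //.
by rewrite xy in Qx.
Qed.

Section DetTrick.
Variable A : comNzRingType.
Implicit Types (J : A -> Prop).

Lemma det_cong J k (B C : 'M[A]_k) : is_ideal J ->
  (forall i j, J (B i j - C i j)) -> J (\det B - \det C).
Proof.
move=> [J0 JD JM] BC; pose Jeq x y := J (x - y).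
have JeqD x1 x2 y1 y2 : Jeq x1 x2 -> Jeq y1 y2 -> Jeq (x1 + y1) (x2 + y2).
  by rewrite /Jeq opprD addrACA; apply: JD.
have JeqM x1 x2 y1 y2 : Jeq x1 x2 -> Jeq y1 y2 -> Jeq (x1 * y1) (x2 * y2).
  rewrite /Jeq => x12 y12.
  have -> : x1 * y1 - x2 * y2 = x1 * (y1 - y2) + y2 * (x1 - x2) by ring.
  by apply: JD; apply: JM.
have Jeq_refl x : Jeq x x by rewrite /Jeq subrr.
apply: (big_ind2 Jeq) => [|//|s _]; first exact: Jeq_refl.
apply: (JeqM) (Jeq_refl _) _.
by apply: (big_ind2 Jeq) => [|//|i _]; [apply: Jeq_refl | apply: BC].
Qed.

Definition ideal_comb J k (g : 'I_k -> A) h :=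
  exists al : 'I_k -> A, (forall l, J (al l)) /\ h = \sum_l al l * g l.

Lemma ideal_comb_is_ideal J k (g : 'I_k -> A) : is_ideal J -> is_ideal (ideal_comb J g).
Proof.
move=> [J0 JD JM]; split.
- by exists (fun=> 0); split=> //; rewrite big1 // => l _; rewrite mul0r.
- move=> _ _ [al [Jal ->]] [be [Jbe ->]]; exists (fun l => al l + be l).
  split=> [l|]; first exact: JD.
  by rewrite -big_split; apply: eq_bigr => l _; rewrite mulrDl.
- move=> r _ [al [Jal ->]]; exists (fun l => r * al l); split=> [l|]; first exact: JM.
  by rewrite mulr_sumr; apply: eq_bigr => l _; rewrite mulrA.
Qed.

Lemma ideal_mul_comb J J' k (g : 'I_k -> A) : is_ideal J ->
  (forall h, J' h -> ideal_comb (@unit_ideal _) g h) ->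
  forall h, ideal_mul J J' h -> ideal_comb J g h.
Proof.
move=> Jid J'g; apply: gen_ideal_min; first exact: ideal_comb_is_ideal.
move=> _ [x [y [Jx [/J'g [be [_ ->]] ->]]]]; exists (fun l => x * be l).
case: Jid => _ _ JM; split=> [l|]; first by rewrite mulrC; apply: JM.
by rewrite mulr_sumr; apply: eq_bigr => l _; rewrite mulrA.
Qed.

End DetTrick.

(* If [g = F g] with the entries of [F] in [J], then [det (1 - F)] annihilates
   every [g j] and is congruent to [1] modulo [J]. *)
Lemma det_trick (A : idomainType) (J : A -> Prop) k (g : 'I_k -> A) : is_ideal J ->
  (forall j, ideal_comb J g (g j)) -> (exists j, g j != 0) -> J 1.
Proof.
move=> Jid /fin_all_exists [F FE] [j0 gj0].
pose M : 'M[A]_k := 1%:M - \matrix_(j, l) F j l.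
have MG : M *m \col_j g j = 0.
  apply/matrixP => j z; rewrite !mxE (ord1 z).
  under eq_bigr do rewrite !mxE mulrBl.
  rewrite sumrB (bigD1 j) //= eqxx mul1r big1 ?addr0 => [|l /negbTE].
    by rewrite -(proj2 (FE j)) subrr.
  by rewrite eq_sym => ->; rewrite mul0r.
have detM : \det M = 0.
  have /(congr1 (fun X : 'cV[A]_k => X j0 0)) := congr1 (mulmx (\adj M)) MG.
  rewrite mulmxA mul_adj_mx mul_scalar_mx mulmx0 !mxE => /eqP.
  by rewrite mulf_eq0 (negbTE gj0) orbF => /eqP.
have : J (\det M - \det (1%:M : 'M[A]_k)).
  apply: det_cong => // i j; rewrite !mxE.
  have -> : (i == j)%:R - F i j - (i == j)%:R = - 1 * F i j :> A by ring.
  by case: Jid => _ _ JM; apply/JM/(proj1 (FE i)).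
rewrite detM det1 sub0r; case: Jid => _ _ JM /(JM (-1)).
by rewrite mulrNN mulr1.
Qed.

Section MonomialIdealUnit.
Variables (R : idomainType) (N : nat) (us : seq 'X_{1..N}).
Variable P : {mpoly R[N]} -> Prop.
Hypothesis Pus : forall p, P p -> exists2 u, u \in us & p = 'X_[u].

(* [b] lies in the monomial ideal [I] by [gen_ideal_cancel], so [I = a b]
   is contained in [a I]; apply the determinant trick to the generators. *)
Lemma monomial_ideal_mul_unit a b p : is_ideal a -> (exists q, P q) ->
  ideal_eq (gen_ideal P) (ideal_mul a b) -> a p -> p@_0%MM != 0 -> a 1.
Proof.
move=> aid [q Pq] Iab ap p0.
have monP r : P r -> exists u, r = 'X_[u] by move=> /Pus [u _ ->]; exists u.
have bI g : b g -> gen_ideal P g.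
  by move=> bg; apply: (gen_ideal_cancel monP p0); apply/Iab/ideal_mul_mul.
have [gl glE] := exists_filter us (fun u => P 'X_[u]).
pose g (l : 'I_(size gl)) : {mpoly R[N]} := 'X_[nth 0%MM gl l].
have Ig h : gen_ideal P h -> ideal_comb (@unit_ideal _) g h.
  apply: gen_ideal_min => [|r Pr]; first exact: ideal_comb_is_ideal.
  have [u us_u rE] := Pus Pr; have ul : (index u gl < size gl)%N.
    by rewrite index_mem; apply/glE; rewrite -rE.
  exists (fun l => (l == Ordinal ul)%:R); split=> //.
  rewrite (bigD1 (Ordinal ul)) //= eqxx mul1r big1 ?addr0 /g ?nth_index ?rE //.
    by rewrite -index_mem.
  by move=> l /negbTE ->; rewrite mul0r.
apply: (det_trick aid (g := g)) => [j|].
  apply: (ideal_mul_comb aid (J' := b)) => [h /bI /Ig //|].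
  by apply/Iab/gen_ideal_gen; have /glE [_] := mem_nth 0%MM (ltn_ord j).
have [u us_u qE] := Pus Pq; have ul : (index u gl < size gl)%N.
  by rewrite index_mem; apply/glE; rewrite -qE.
by exists (Ordinal ul); apply: mpolyX_neq0.
Qed.

End MonomialIdealUnit.

Lemma lincomb_mcoeff (R : nzRingType) N (G : {mpoly R[N]} -> Prop) v u :
  lincomb G v -> v@_u != 0 -> exists2 g, G g & g@_u != 0.
Proof.
move=> Gv vu; apply: NNPP => nex; move/eqP: vu; apply.
apply: (@lincomb_min _ _ _ (fun v => v@_u = 0)) Gv => [|g Gg].
  split=> [|x y xu yu|c x xu]; first exact: mcoeff0.
    by rewrite mcoeffD xu yu addr0.
  by rewrite mcoeffZ xu mulr0.
by apply/eqP/negPn/negP => gu; apply: nex; exists g.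
Qed.

Lemma spmulC (K : fieldType) N (V W : {mpoly K[N]} -> Prop) h :
  spmul V W h -> spmul W V h.
Proof.
apply: lincomb_min => [|_ [v [w [Vv [Ww ->]]]]]; first exact: lincomb_submodule.
by apply: lincomb_gen; exists w, v; rewrite mulrC.
Qed.

Lemma mdeg_mlead_dhomog (R : nzRingType) N (f : {mpoly R[N]}) d :
  f != 0 -> f \is d.-homog -> mdeg (mlead f) = d.
Proof. by move=> f0 /dhomogP; apply; apply: mlead_supp. Qed.

(* The exponents a_j of Y in the leading monomials in(f_j). *)
Definition ydegs (R : nzRingType) n (fs : seq {mpoly R[n.+2]}) :=
  [seq mlead f (oy n) | f <- fs].

Section LeadingMonomials.
Variables (K : fieldType) (n m d : nat) (Q : nat -> Prop).
Local Notation S := {mpoly K[n.+2]}.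
Variables (V W : S -> Prop) (fs gs : seq S).
Hypotheses (fsV : is_basis V fs) (gsW : is_basis W gs).
Hypotheses (sfs : mlead_decr fs) (sgs : mlead_decr gs).
Hypotheses (nfs : 0 \notin fs) (ngs : 0 \notin gs).
Hypotheses (Vd : forall v, V v -> v \is d.-homog) (d_gt0 : (0 < d)%N).
Hypothesis VWsupp : forall h, spmul V W h -> forall u, u \in msupp h ->
  exists i, [/\ (i <= m)%N, Q i & u = monXY n m i].
Hypotheses (VWX : spmul V W 'X_[monXY n m 0]) (VWY : spmul V W 'X_[monXY n m m]).

Let neq0 (s : seq S) x : 0 \notin s -> x \in s -> x != 0.
Proof. by move=> s0; apply: contraTneq => ->. Qed.

Lemma spmul_basis h : spmul V W h -> spmul (fun x => x \in fs) (fun x => x \in gs) h.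
Proof.
case: fsV gsW => [_ _ Vfs] [_ _ Wgs].
apply: lincomb_min => [|_ [v [w [/Vfs [cs [csE vE]] [/Wgs [ds [dsE wE]] ->]]]]].
  exact: lincomb_submodule.
apply: (lincomb_mul2 (G := fun x => x \in fs) (H := fun x => x \in gs)
  (lincomb_submodule _)) => [f g ffs ggs||].
- by apply: lincomb_gen; exists f, g; split=> //; split.
- by exists cs, fs.
- by exists ds, gs.
Qed.

Lemma mleadM_monXY f g : f \in fs -> g \in gs ->
  exists i, [/\ (i <= m)%N, Q i & (mlead f + mlead g)%MM = monXY n m i].
Proof.
move=> ffs ggs; have f0 := neq0 nfs ffs; have g0 := neq0 ngs ggs.
rewrite -mleadM //; apply: VWsupp (mlead_supp _); last by rewrite mulf_neq0.
case: fsV gsW => [fsV' _ _] [gsW' _ _]; apply: lincomb_gen; exists f, g.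
by split; [apply: fsV' | split; [apply: gsW' |]].
Qed.

Lemma mlead_head : [/\ (0 < size fs)%N, (0 < size gs)%N & mlead fs`_0 = monXY n d 0].
Proof.
have : 'X_[monXY n m 0]@_(monXY n m 0) != 0 :> K by rewrite mcoeffX eqxx oner_eq0.
case/(lincomb_mcoeff (spmul_basis VWX)) => _ [f [g [ffs [ggs ->]]]] fg0.
have fs_gt0 : (0 < size fs)%N by rewrite lt0n size_eq0; apply: contraTneq ffs => ->.
have gs_gt0 : (0 < size gs)%N by rewrite lt0n size_eq0; apply: contraTneq ggs => ->.
have f0fs := mem_nth 0 fs_gt0; have g0gs := mem_nth 0 gs_gt0; split=> //.
have [i [im _ iE]] := mleadM_monXY f0fs g0gs.
have i0 : i = 0%N.
  apply/eqP/negPn/negP; rewrite -lt0n => i_gt0.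
  have := @monXY_lt0 n m i; rewrite i_gt0 im => /(_ isT).
  rewrite -iE ltNge => /negP; apply.
  apply: le_trans (msupp_le_mlead (p := f * g) _) _; first by rewrite mcoeff_msupp.
  by rewrite mleadM ?(neq0 nfs ffs) ?(neq0 ngs ggs) // lem_add // mlead_decr_head.
have /eqP := congr1 (fun u : 'X_{1..n.+2} => u (oy n)) iE.
rewrite /= mnmDE monXY_y i0 addn_eq0 => /andP [/eqP y0 _].
have f0d : fs`_0 \is d.-homog by case: fsV => fsV' _ _; apply/Vd/fsV'.
by rewrite (monXY_addm iE) y0 (mdeg_mlead_dhomog (neq0 nfs f0fs) f0d).
Qed.

Lemma size_ge2 : (2 <= size fs)%N.
Proof.
have [fs_gt0 _ f0E] := mlead_head; have f0 := neq0 nfs (mem_nth 0 fs_gt0).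
rewrite ltnNge; apply/negP => fs_le1.
have fsE f : f \in fs -> f = fs`_0.
  move=> ffs; rewrite -(nth_index 0 ffs); congr nth.
  by apply/eqP; rewrite -leqn0 -ltnS (leq_trans _ fs_le1) ?index_mem.
pose F v := exists h, v = fs`_0 * h.
have [h Yh] : F 'X_[monXY n m m].
  apply: lincomb_min (spmul_basis VWY) => [|_ [f [g [/fsE -> [_ ->]]]]]; last by exists g.
  split=> [|_ _ [h1 ->] [h2 ->]|c _ [h ->]]; first by exists 0; rewrite mulr0.
    by exists (h1 + h2); rewrite mulrDr.
  by exists (c *: h); rewrite scalerAr.
have h0 : h != 0.
  by apply: contraTneq (mpolyX_neq0 K (monXY n m m)) => h0; rewrite Yh h0 mulr0 eqxx.
have /(congr1 (fun u : 'X_{1..n.+2} => u (ox n))) := congr1 (@mlead _ _) Yh.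
rewrite mleadXm mleadM // f0E /= mnmDE !monXY_x subnn subn0.
by move/esym/eqP; rewrite addn_eq0 => /andP [/eqP d0]; move: d_gt0; rewrite d0.
Qed.

Let fs_homog j : (j < size fs)%N -> fs`_j \is d.-homog.
Proof. by case: fsV => fsV' _ _ jfs; apply/Vd/fsV'/mem_nth. Qed.

Lemma mlead_monXY j : (j < size fs)%N ->
  mlead fs`_j = monXY n d (nth 0%N (ydegs fs) j) /\ (nth 0%N (ydegs fs) j <= d)%N.
Proof.
move=> jfs; have [_ gs_gt0 _] := mlead_head; have fj := mem_nth 0 jfs.
have [i [_ _ iE]] := mleadM_monXY fj (mem_nth 0 gs_gt0).
rewrite (nth_map 0) // -(mdeg_mlead_dhomog (neq0 nfs fj) (fs_homog jfs)).
by rewrite {1}(monXY_addm iE); split=> //; rewrite mdegE (bigD1 (oy n)) //= leq_addr.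
Qed.

Lemma mlead_fs_lt i j : (i < j < size fs)%N -> (mlead fs`_j < mlead fs`_i)%O.
Proof.
case/andP => ij jfs.
apply: (sorted_ltn_nth (fun _ _ _ xy yz => lt_trans yz xy) 0 sfs) => //.
by rewrite inE (ltn_trans ij jfs).
Qed.

Lemma inm_fs j : (j < size fs)%N -> inm fs`_j = mlead fs`_j.
Proof. by move=> jfs; apply/inm_dhomog/fs_homog. Qed.

Lemma inm_head_lexlt : 'X_[inm fs`_0] = varX K n ^+ d /\
  forall j, (j.+1 < size fs)%N -> lexlt (inm fs`_j.+1) (inm fs`_j).
Proof.
have [fs_gt0 _ f0E] := mlead_head.
split=> [|j jfs]; first by rewrite inm_fs // f0E mpolyX_monXY subn0 expr0 mulr1.
have j'fs := ltnW jfs; rewrite !inm_fs // lexltE ?mlead_fs_lt ?leqnn //.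
by rewrite !(mdeg_mlead_dhomog _ (fs_homog _)) // (neq0 nfs) // mem_nth.
Qed.

Lemma ydegs_spec : let as_ := ydegs fs in
  [/\ size as_ = size fs, nth 0%N as_ 0 = 0%N,
      forall j, (1 <= j < size fs)%N -> (1 <= nth 0%N as_ j <= d)%N &
      forall j, (j < size fs)%N ->
        'X_[inm fs`_j] = varX K n ^+ (d - nth 0%N as_ j) * varY K n ^+ nth 0%N as_ j].
Proof.
have [fs_gt0 _ f0E] := mlead_head.
split=> [|||j jfs]; first exact: size_map.
- by rewrite (nth_map 0) // f0E monXY_y.
- move=> j /andP [j_gt0 jfs]; have [fjE ->] := mlead_monXY jfs; rewrite andbT lt0n.
  have := @mlead_fs_lt 0 j; rewrite j_gt0 jfs => /(_ isT); apply: contraTneq => a0.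
  by rewrite fjE a0 -f0E ltxx.
- by rewrite inm_fs // (proj1 (mlead_monXY jfs)) mpolyX_monXY.
Qed.

Lemma ydegs_pair j k : (j < size fs)%N -> (k < size gs)%N ->
  Q (nth 0%N (ydegs fs) j + nth 0%N (ydegs gs) k).
Proof.
move=> jfs kgs; have [i [_ Qi iE]] := mleadM_monXY (mem_nth 0 jfs) (mem_nth 0 kgs).
have /= := congr1 (fun u : 'X_{1..n.+2} => u (oy n)) iE.
by rewrite mnmDE monXY_y !(nth_map 0) // => ->.
Qed.

Lemma leading_monomials :
  [/\ (2 <= size fs)%N, 'X_[inm fs`_0] = varX K n ^+ d,
      forall j, (j.+1 < size fs)%N -> lexlt (inm fs`_j.+1) (inm fs`_j),
      [/\ size (ydegs fs) = size fs, nth 0%N (ydegs fs) 0 = 0%N,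
          forall j, (1 <= j < size fs)%N -> (1 <= nth 0%N (ydegs fs) j <= d)%N &
          forall j, (j < size fs)%N -> 'X_[inm fs`_j] =
            varX K n ^+ (d - nth 0%N (ydegs fs) j) * varY K n ^+ nth 0%N (ydegs fs) j] &
      forall j k, (j < size fs)%N -> (k < size gs)%N ->
        Q (nth 0%N (ydegs fs) j + nth 0%N (ydegs gs) k)].
Proof.
have [f0X flex] := inm_head_lexlt.
by split=> //; [exact: size_ge2 | exact: ydegs_spec | exact: ydegs_pair].
Qed.

End LeadingMonomials.

Section MonXYIdeal.
Variables (R : idomainType) (n m : nat) (P : {mpoly R[n.+2]} -> Prop).
Hypothesis Pmon : forall p, P p -> exists i, (i <= m)%N /\ p = 'X_[monXY n m i].
Hypothesis PX : P 'X_[monXY n m 0].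

Lemma is_mdeg_gen_monXY : is_mdeg (gen_ideal P) m.
Proof.
apply: is_mdegP.
  apply: (gen_ideal_min (vanish_below_is_ideal _ _ _)) => _ /Pmon [i [im ->]] u um.
  by rewrite mcoeffX; case: eqP => // uE; rewrite -uE mdeg_monXY // ltnn in um.
exists 'X_[monXY n m 0]; first exact: gen_ideal_gen.
by rewrite hcomp_id ?mpolyX_neq0 // dhomogX /= mdeg_monXY.
Qed.

Lemma mdeg_factor_gt0 a b d : is_ideal a -> ideal_eq (gen_ideal P) (ideal_mul a b) ->
  is_mdeg a d -> ~ ideal_eq a (@unit_ideal _) -> (0 < d)%N.
Proof.
move=> aid Iab [[f [af _ fd]] _] a_neq1; rewrite lt0n; apply/eqP => d0; apply: a_neq1.
have Pus p : P p -> exists2 u, u \in [seq monXY n m i | i <- iota 0 m.+1] & p = 'X_[u].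
  by move=> /Pmon [i [im ->]]; exists (monXY n m i) => //; apply: map_f; rewrite mem_iota.
rewrite d0 in fd.
have a1 := monomial_ideal_mul_unit Pus aid (ex_intro _ _ PX) Iab af (mindeg0_mcoeff0 fd).
by move=> x; split=> // _; rewrite -[x]mulr1; case: aid => _ _; apply.
Qed.

End MonXYIdeal.

Lemma JK_gen_monXY (D : idomainType) n m (P : {mpoly D[n.+2]} -> Prop) i :
  P 'X_[monXY n m i] -> (i <= m)%N -> JK (gen_ideal P) m 'X_[monXY n m i].
Proof.
move=> Pi im; have := JK_hcomp m (gen_ideal_gen Pi).
by rewrite hcomp_id ?dhomogX /= ?mdeg_monXY // /extK map_mpolyX.
Qed.

Lemma monXY_gens (R : comNzRingType) n m (Nset : {mpoly R[n.+2]} -> Prop) :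
  (forall p, Nset p -> exists i, (i <= m)%N /\ p = varX R n ^+ (m - i) * varY R n ^+ i) ->
  forall p, p = varX R n ^+ m \/ p = varY R n ^+ m \/ Nset p ->
  exists i, (i <= m)%N /\ p = 'X_[monXY n m i].
Proof.
move=> Nmon p [->|[->|/Nmon [i [im ->]]]]; [exists 0%N | exists m | exists i];
  by rewrite mpolyX_monXY ?subn0 ?subnn ?expr0 ?mulr1 ?mul1r.
Qed.

Unset Implicit Arguments.
Theorem lemma3p1 (D : idomainType) (n : nat)
  (HBF : BF_ideals {mpoly D[n.+2]})
  (m : nat) (hm : (0 < m)%N)
  (Nset : {mpoly D[n.+2]} -> Prop)
  (hNset : forall p, Nset p ->
     exists i, (i <= m)%N /\ p = varX D n ^+ (m - i) * varY D n ^+ i)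
  (a b : {mpoly D[n.+2]} -> Prop)
  (ha : nonzero_ideal a) (ha1 : ~ ideal_eq a (@unit_ideal _))
  (hb : nonzero_ideal b) (hb1 : ~ ideal_eq b (@unit_ideal _))
  (hI : ideal_eq
          (gen_ideal (fun p => p = varX D n ^+ m \/ p = varY D n ^+ m \/ Nset p))
          (ideal_mul a b))
  (d e r s : nat)
  (hd : is_mdeg a d) (he : is_mdeg b e)
  (hr : is_dim (JK a d) r) (hs : is_dim (JK b e) s) :
  let I := gen_ideal (fun p => p = varX D n ^+ m \/ p = varY D n ^+ m \/ Nset p) in
  (* (i) *)
  (m = d + e /\ ideal_eq (JK I m) (spmul (JK a d) (JK b e)))%N /\
  (* (ii) *)
  (1 <= d /\ 1 <= e)%N /\
  (* (iii), (iv), (v) *)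
  exists (fs gs : seq {mpoly {fraction D}[n.+2]}) (as_ bs : seq nat),
    [/\ [/\ (2 <= r)%N, size fs = r, is_basis (JK a d) fs,
            'X_[inm fs`_0] = varX {fraction D} n ^+ d &
            forall j, (j.+1 < r)%N -> lexlt (inm fs`_j.+1) (inm fs`_j)],
        [/\ (2 <= s)%N, size gs = s, is_basis (JK b e) gs,
            'X_[inm gs`_0] = varX {fraction D} n ^+ e &
            forall k, (k.+1 < s)%N -> lexlt (inm gs`_k.+1) (inm gs`_k)],
        [/\ size as_ = r, nth 0%N as_ 0 = 0%N,
            forall j, (1 <= j < r)%N -> (1 <= nth 0%N as_ j <= d)%N &
            forall j, (j < r)%N ->
              'X_[inm fs`_j] =
                varX {fraction D} n ^+ (d - nth 0%N as_ j) * varY {fraction D} n ^+ nth 0%N as_ j],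
        [/\ size bs = s, nth 0%N bs 0 = 0%N,
            forall k, (1 <= k < s)%N -> (1 <= nth 0%N bs k <= e)%N &
            forall k, (k < s)%N ->
              'X_[inm gs`_k] =
                varX {fraction D} n ^+ (e - nth 0%N bs k) * varY {fraction D} n ^+ nth 0%N bs k] &
        forall j k, (j < r)%N -> (k < s)%N ->
          let c := (nth 0%N as_ j + nth 0%N bs k)%N in
          let mon := varX D n ^+ (m - c) * varY D n ^+ c in
          mon = varX D n ^+ m \/ mon = varY D n ^+ m \/ Nset mon].
Proof.
move=> I; set P := (fun p => _) in hI I *.
have Pmon := monXY_gens hNset.
have PX : P 'X_[monXY n m 0] by left; rewrite mpolyX_monXY subn0 expr0 mulr1.
have PY : P 'X_[monXY n m m] by right; left; rewrite mpolyX_monXY subnn expr0 mul1r.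
have m_de : m = (d + e)%N.
  exact: is_mdeg_uniq (is_mdeg_eq hI (is_mdeg_gen_monXY Pmon PX)) (is_mdeg_mul hd he).
have d_gt0 := mdeg_factor_gt0 Pmon PX (proj1 ha) hI hd ha1.
have e_gt0 := mdeg_factor_gt0 Pmon PX (proj1 hb) (ideal_eq_mulC hI) he hb1.
have JKI : ideal_eq (JK I m) (spmul (JK a d) (JK b e)).
  by rewrite m_de; apply: JK_mul hI (proj1 ha) hd he.
have supp h (VWh : spmul (JK a d) (JK b e) h) := JK_gen_msupp Pmon ((JKI h).2 VWh).
have [fs [fs_r fsb sfs nfs]] := echelon_basis hr (@lincomb_idem _ _ _).
have [gs [gs_s gsb sgs ngs]] := echelon_basis hs (@lincomb_idem _ _ _).
have VWX := (JKI _).1 (JK_gen_monXY PX (leq0n m)).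
have VWY := (JKI _).1 (JK_gen_monXY PY (leqnn m)).
have [fs2 f0X flex fy pair] := leading_monomials fsb gsb sfs sgs nfs ngs
  (@JK_dhomog _ _ a d) d_gt0 supp VWX VWY.
have [gs2 g0X glex gy _] := leading_monomials gsb fsb sgs sfs ngs nfs
  (@JK_dhomog _ _ b e) e_gt0 (fun h hWV => supp h (spmulC hWV)) (spmulC VWX) (spmulC VWY).
split; first by split.
split; first by split.
exists fs, gs, (ydegs fs), (ydegs gs); rewrite -fs_r -gs_s.
by split=> // j k jr ks; rewrite /= -mpolyX_monXY; apply: pair.
Qed.
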